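(* Let $f$ be a convergent power series in $\mathbf z=(z_1,\dots,z_n)$ with $f(\mathbf 0)=0$. Let $P=(p_1,\dots,p_n)$ be a vertex of the dual Newton diagram $\Gamma^*(f)$ which is not strictly positive, and put $I(P)=\{i:p_i=0\}$. If $\mathbb C^{I(P)}$ is not a vanishing coordinate subspace of $f$, then $P$ is (up to the positive scaling with which vertices are defined) one of the standard basis vectors $e_1,\dots,e_n$.
   Context: Newton diagram $\Gamma_+(f)$: convex hull of $\bigcup_{c_\nu\ne0}(\nu+\mathbb R_{\ge0}^n)$ for $f=\sum c_\nu\mathbf z^\nu$. For a weight vector $P\in\mathbb R_{\ge0}^n$, $\Delta(P,f)$ is the face of $\Gamma_+(f)$ on which $\nu\mapsto\sum p_i\nu_i$ attains its minimum. $P\sim Q$ iff $\Delta(P,f)=\Delta(Q,f)$; the classes form a cone subdivision $\Gamma^*(f)$ of $\mathbb R_{\ge0}^n$, and a vertex is a non-zero weight vector spanning a one-dimensional cone of this subdivision. $P$ is strictly positive if all $p_i>0$. For $I\subset\{1,\dots,n\}$, $\mathbb C^I=\{\mathbf z: z_j=0 \text{ for } j\notin I\}$ and $f^I=f|_{\mathbb C^I}$; $\mathbb C^I$ is a vanishing coordinate subspace if $f^I\equiv0$. *)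

From HB Require Import structures.
From mathcomp Require Import all_boot all_order all_algebra.
From mathcomp Require Import reals.
From mathcomp.real_closed Require Import complex.
Set Implicit Arguments. Unset Strict Implicit. Unset Printing Implicit Defensive.
Import Order.TTheory GRing.Theory Num.Theory.
Local Open Scope ring_scope.

Definition expo (n : nat) := {ffun 'I_n -> nat}.

(* A formal power series in z_1..z_n with complex coefficients:
   f = sum_nu (f nu) z^nu. *)
Definition pseries (R : realType) (n : nat) := expo n -> R[i].

Definition deg n (nu : expo n) : nat := (\sum_(i < n) nu i)%N.

(* convergent: absolutely convergent on some polydisc of radius r > 0 *)
Definition convergent (R : realType) n (f : pseries R n) : Prop :=
  exists r : R, 0 < r /\ exists M : R, forall s : seq (expo n), uniq s ->
    \sum_(nu <- s) `|f nu| * (r%:C)%C ^+ deg nu <= (M%:C)%C.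

Definition zero_expo n : expo n := [ffun => 0%N].

(* Newton diagram Gamma_+(f): convex hull of the union of nu + R_{>=0}^n
   over nu with f nu != 0 *)
Definition in_newton (R : realType) n (f : pseries R n) (x : 'I_n -> R) : Prop :=
  exists (s : seq (expo n)) (lam : expo n -> R),
    (forall nu, nu \in s -> f nu != 0 /\ 0 <= lam nu) /\
    \sum_(nu <- s) lam nu = 1 /\
    (forall i, \sum_(nu <- s) lam nu * (nu i)%:R <= x i).

Definition dotw (R : realType) n (P x : 'I_n -> R) : R := \sum_(i < n) P i * x i.

Definition weight (R : realType) n (P : 'I_n -> R) : Prop := forall i, 0 <= P i.

Definition face (R : realType) n (f : pseries R n) (P : 'I_n -> R) (x : 'I_n -> R) : Prop :=
  in_newton f x /\ forall y, in_newton f y -> dotw P x <= dotw P y.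

Definition wequiv (R : realType) n (f : pseries R n) (P Q : 'I_n -> R) : Prop :=
  forall x, face f P x <-> face f Q x.

(* vertex of Gamma^*(f): non-zero weight vector whose equivalence class
   (a relatively open cone of the subdivision) is the one-dimensional
   open ray spanned by P *)
Definition vertex (R : realType) n (f : pseries R n) (P : 'I_n -> R) : Prop :=
  weight P /\ (exists i, P i != 0) /\
  forall Q, weight Q -> (wequiv f P Q <-> exists t : R, 0 < t /\ Q = (fun i => t * P i)).

(* C^I is a vanishing coordinate subspace: f^I = f|_{C^I} == 0, i.e. all
   coefficients of monomials in the variables z_i (i in I) only vanish *)
Definition vanishing_coord (R : realType) n (f : pseries R n) (I : {set 'I_n}) : Prop :=
  forall nu : expo n, (forall j, j \notin I -> nu j = 0%N) -> f nu = 0.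

(* If some monomial z^nu of f involves only variables z_j with p_j = 0, then
   nu lies on Gamma_+(f) and P.nu = 0, so Delta(P,f) is the set of points of
   Gamma_+(f) vanishing on the support of P: the face depends only on that
   support.  Every weight with the same support is thus equivalent to P.  If
   the support had two elements i <> k, doubling p_i would give an equivalent
   weight that is not a positive multiple of P, so P would not span a ray. *)

From HB Require Import structures.
From mathcomp Require Import all_boot all_order all_algebra.
From mathcomp Require Import reals.
From mathcomp.real_closed Require Import complex.
From mathcomp Require Import boolp.
Set Implicit Arguments. Unset Strict Implicit. Unset Printing Implicit Defensive.
Import Order.TTheory GRing.Theory Num.Theory.
Local Open Scope ring_scope.

Section FaceOfWeight.
Variables (R : realType) (n : nat) (f : pseries R n).

Lemma in_newton_ge0 x : in_newton f x -> forall j, 0 <= x j.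
Proof.
move=> [s [lam [Hs [_ Hx]]]] j; apply: le_trans (Hx j).
rewrite big_seq; apply: sumr_ge0 => nu /Hs [_ lam_ge0].
exact: mulr_ge0.
Qed.

Lemma dotw_ge0 P x : weight P -> in_newton f x -> 0 <= dotw P x.
Proof.
move=> HP Hx; apply: sumr_ge0 => j _.
exact: mulr_ge0 (HP j) (in_newton_ge0 Hx j).
Qed.

Lemma dotw_eq0P P x : weight P -> in_newton f x ->
  dotw P x = 0 <-> forall j, P j != 0 -> x j = 0.
Proof.
move=> HP Hx; split=> [Px0 j Pj | Hsupp].
  have Pxk_ge0 k : xpredT k -> 0 <= P k * x k.
    by move=> _; exact: mulr_ge0 (HP k) (in_newton_ge0 Hx k).
  move: (@psumr_eq0P _ _ _ (fun k => P k * x k) Pxk_ge0 Px0 j isT) => /eqP.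
  by rewrite mulf_eq0 (negbTE Pj) => /eqP.
apply: big1 => j _.
by have [->|/Hsupp ->] := eqVneq (P j) 0; rewrite ?mul0r ?mulr0.
Qed.

Lemma in_newton_expo nu : f nu != 0 -> in_newton f (fun i => (nu i)%:R).
Proof.
move=> fnu; exists [:: nu], (fun _ => 1); split.
  by move=> mu; rewrite inE => /eqP ->.
by split=> [|i]; rewrite big_seq1 // mul1r.
Qed.

Lemma face_supportE P nu x : weight P -> f nu != 0 ->
  (forall j, P j != 0 -> nu j = 0%N) ->
  face f P x <-> in_newton f x /\ forall j, P j != 0 -> x j = 0.
Proof.
move=> HP fnu nuP.
have Hnu := in_newton_expo fnu.
have Pnu0 : dotw P (fun i => (nu i)%:R) = 0.
  by apply/(dotw_eq0P HP Hnu) => j /nuP ->.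
split=> [[Hx xmin] | [Hx xP]].
  split=> //; apply/(dotw_eq0P HP Hx)/eqP.
  by rewrite eq_le dotw_ge0 // andbT -Pnu0 xmin.
split=> // y Hy.
by rewrite (proj2 (dotw_eq0P HP Hx) xP) dotw_ge0.
Qed.

Lemma wequiv_same_support P Q nu : weight P -> weight Q ->
  (forall j, (Q j != 0) = (P j != 0)) ->
  f nu != 0 -> (forall j, P j != 0 -> nu j = 0%N) ->
  wequiv f P Q.
Proof.
move=> HP HQ suppQ fnu nuP x.
have nuQ j : Q j != 0 -> nu j = 0%N by rewrite suppQ; exact: nuP.
rewrite (face_supportE x HP fnu nuP) (face_supportE x HQ fnu nuQ).
by under [X in _ <-> _ /\ X]eq_forall do rewrite suppQ.
Qed.

Lemma vertex_support1 P nu i k : vertex f P ->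
  f nu != 0 -> (forall j, P j != 0 -> nu j = 0%N) ->
  P i != 0 -> P k != 0 -> k = i.
Proof.
move=> [HP [_ Pray]] fnu nuP Pi Pk; apply/eqP/negP => /negP ki.
pose Q j := P j + (if j == i then P j else 0).
have HQ : weight Q by move=> j; rewrite /Q; case: ifP => _; rewrite addr_ge0.
have suppQ j : (Q j != 0) = (P j != 0).
  by rewrite /Q; case: ifP => _; rewrite ?addr0 // paddr_eq0 // andbb.
have [t [_ QtP]] := proj1 (Pray Q HQ) (wequiv_same_support HP HQ suppQ fnu nuP).
have := congr1 (fun g => g k) QtP; have := congr1 (fun g => g i) QtP.
rewrite /Q /= (negbTE ki) eqxx addr0 => Qi Qk.
have t1 : t = 1 by apply: (mulIf Pk); rewrite mul1r -Qk.
by move: Qi; rewrite t1 mul1r -[RHS]add0r => /addIr /eqP; rewrite (negbTE Pi).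
Qed.

Lemma not_vanishing_coordP (I : {set 'I_n}) : ~ vanishing_coord f I ->
  exists2 nu : expo n, forall j, j \notin I -> nu j = 0%N & f nu != 0.
Proof.
move=> fI; apply: contra_notP fI => no_nu nu nuI.
by apply: contra_notP no_nu => /eqP fnu; exists nu.
Qed.

End FaceOfWeight.

Theorem proposition8 (R : realType) (n : nat) (f : pseries R n) :
  convergent f -> f (zero_expo n) = 0 ->
  forall P : 'I_n -> R, vertex f P ->
  (exists i, P i = 0) ->
  ~ vanishing_coord f [set i | P i == 0] ->
  exists (i : 'I_n) (t : R), 0 < t /\ P = (fun j => if j == i then t else 0).
Proof.
move=> _ _ P vP _ /not_vanishing_coordP [nu nuP fnu].
have {}nuP j : P j != 0 -> nu j = 0%N by move=> Pj; apply: nuP; rewrite inE.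
have [HP [[i Pi] _]] := vP.
exists i, (P i); split; first by rewrite lt_def Pi HP.
apply: funext => j; case: eqVneq => [-> //|ji].
apply/eqP/negP => /negP Pj.
by move: ji; rewrite (vertex_support1 vP fnu nuP Pi Pj) eqxx.
Qed.
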